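(* Let $V \ge 2$ be an integer, let $z \in \mathbb{R}^V$ be a logit vector and let $p = \mathrm{softmax}(z) \in \Delta^{V-1}$, i.e. $p_j = e^{z_j}/\sum_{k=1}^V e^{z_k}$. Define the token-wise self-certainty \[ \mathrm{SC}(p) = \mathrm{KL}(U \,\|\, p) = -\frac{1}{V}\sum_{j=1}^V \log\big(V\,p_j\big), \] where $U$ is the uniform distribution on $\{1,\dots,V\}$. Fix a target index $y^* \in \{1,\dots,V\}$ and consider the gradient-ascent direction on $\log p_{y^*}$ with respect to the logits, $\Delta z_k = \frac{\partial \log p_{y^*}}{\partial z_k} = \delta_{k,y^*} - p_k$ for $k=1,\dots,V$. For $\eta \ge 0$ set $z(\eta) = z + \eta\,\Delta z$ and $p(\eta) = \mathrm{softmax}(z(\eta))$. Then \[ \left.\frac{d}{d\eta}\mathrm{SC}\big(p(\eta)\big)\right|_{\eta=0} > 0 \quad\Longleftrightarrow\quad p_{y^*} > \|p\|_2^2 = \sum_{k=1}^V p_k^2 . \] That is, a gradient-ascent step on $\log p_{y^*}$ increases the self-certainty to first order in the step size if and only if $p_{y^*} > \|p\|_2^2$.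
   Context: $\delta_{k,y^*}$ is the Kronecker delta. $\Delta^{V-1}$ denotes the probability simplex in $\mathbb{R}^V$. *)

From HB Require Import structures.
From mathcomp Require Import all_boot all_order all_algebra.
From mathcomp Require Import all_classical all_reals all_analysis.
Set Implicit Arguments. Unset Strict Implicit. Unset Printing Implicit Defensive.
Import Order.TTheory GRing.Theory Num.Theory.
Local Open Scope ring_scope.

Definition softmax (R : realType) (V : nat) (z : 'I_V -> R) : 'I_V -> R :=
  fun j => expR (z j) / \sum_(k < V) expR (z k).

Definition SC (R : realType) (V : nat) (p : 'I_V -> R) : R :=
  - (V%:R)^-1 * \sum_(j < V) ln (V%:R * p j).

Definition grad_logp (R : realType) (V : nat) (p : 'I_V -> R) (y : 'I_V) : 'I_V -> R :=
  fun k => (k == y)%:R - p k.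

From HB Require Import structures.
From mathcomp Require Import all_boot all_order all_algebra.
From mathcomp Require Import all_classical all_reals all_analysis.
From mathcomp Require Import ring.
Import Order.TTheory GRing.Theory Num.Theory.
Local Open Scope ring_scope.

(* Since ln (V softmax(w)_j) = ln V + w_j - ln (sum_k e^(w_k)), the self-certainty of
   softmax(w) is the log-sum-exp of w minus the mean logit minus ln V.  The direction
   delta_{k,y*} - p_k sums to zero, so the mean logit is constant along the line
   z + eta dz, and the derivative of SC is that of the log-sum-exp, i.e. the
   p-average of dz, which is p_{y*} - sum_k p_k^2. *)

Section Softmax.
Variables (R : realType) (V : nat).
Hypothesis V_gt0 : (0 < V)%N.
Implicit Types (w z d p : 'I_V -> R) (k : 'I_V) (x : R).

Lemma sum_expR_gt0 w : 0 < \sum_(k < V) expR (w k).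
Proof.
rewrite (bigD1 (Ordinal V_gt0)) //= ltr_pwDl ?expR_gt0 //.
by apply: sumr_ge0 => k _; exact: expR_ge0.
Qed.

Lemma softmax_sum1 w : \sum_(k < V) softmax w k = 1.
Proof. by rewrite -mulr_suml mulfV // lt0r_neq0 // sum_expR_gt0. Qed.

Lemma SC_softmax w :
  SC (softmax w) =
  ln (\sum_(k < V) expR (w k)) - V%:R^-1 * \sum_(k < V) w k - ln V%:R.
Proof.
have S_gt0 := sum_expR_gt0 w.
have V_neq0 : V%:R != 0 :> R by rewrite pnatr_eq0 -lt0n.
have lnVp j : ln (V%:R * softmax w j) = ln V%:R + w j - ln (\sum_(k < V) expR (w k)).
  rewrite /softmax lnM ?posrE ?ltr0n ?divr_gt0 ?expR_gt0 //.
  by rewrite ln_div ?posrE ?expR_gt0 // expRK addrA.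
rewrite /SC (eq_bigr _ (fun j _ => lnVp j)) sumrB big_split /= !sumr_const card_ord.
by rewrite -(mulr_natr (ln V%:R)) -(mulr_natr (ln _) V); field.
Qed.

Lemma is_derive_expR_line z d k x :
  is_derive x 1 (fun eta => expR (z k + eta * d k)) (expR (z k + x * d k) * d k).
Proof.
by apply: is_derive_eq; rewrite add0r mul1r scaler0 add0r; congr (_ * _); exact: mulr1.
Qed.

Lemma is_derive_lse_line z d x :
  is_derive x 1 (fun eta => ln (\sum_(k < V) expR (z k + eta * d k)))
    (\sum_(k < V) softmax (fun k => z k + x * d k) k * d k).
Proof.
have sum_gt0 := sum_expR_gt0 (fun k => z k + x * d k).
have D : is_derive x 1 (fun eta => \sum_(k < V) expR (z k + eta * d k))
    (\sum_(k < V) expR (z k + x * d k) * d k).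
  by have := is_derive_sum (fun k => is_derive_expR_line z d k x); rewrite fct_sumE.
apply: is_derive_eq (is_derive1_comp (is_derive1_ln sum_gt0) D) _.
by rewrite mulr_sumr; apply: eq_bigr => k _; rewrite /softmax mulrCA mulrA.
Qed.

Lemma derive1_SC_softmax_line z d x : \sum_(k < V) d k = 0 ->
  derive1 (fun eta => SC (softmax (fun k => z k + eta * d k))) x =
  \sum_(k < V) softmax (fun k => z k + x * d k) k * d k.
Proof.
move=> d_sum0.
pose c := V%:R^-1 * \sum_(k < V) z k + ln V%:R.
have -> : (fun eta => SC (softmax (fun k => z k + eta * d k))) =
    (fun eta => ln (\sum_(k < V) expR (z k + eta * d k))) - cst c.
  apply/funext => eta /=.
  by rewrite SC_softmax big_split /= -mulr_sumr d_sum0 mulr0 addr0 opprD addrA.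
have := is_deriveB (is_derive_lse_line z d x) (is_derive_cst c x 1).
by rewrite subr0 derive1E => D; exact: derive_val.
Qed.

Lemma sum_grad_logp p y : \sum_(k < V) p k = 1 -> \sum_(k < V) grad_logp p y k = 0.
Proof.
move=> p_sum1; rewrite sumrB p_sum1 (bigD1 y) //= eqxx big1 ?addr0 ?subrr //.
by move=> k /negbTE ->.
Qed.

Lemma sum_mul_grad_logp p y :
  \sum_(k < V) p k * grad_logp p y k = p y - \sum_(k < V) p k ^+ 2.
Proof.
under eq_bigr do rewrite mulrBr.
rewrite sumrB (bigD1 y) //= eqxx mulr1 big1 ?addr0; last by move=> k /negbTE ->; rewrite mulr0.
by under [in RHS]eq_bigr do rewrite expr2.
Qed.

End Softmax.

Theorem theorem1 (R : realType) (V : nat) (hV : (2 <= V)%N)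
    (z : 'I_V -> R) (ystar : 'I_V) :
  let p := softmax z in
  let dz := grad_logp p ystar in
  (0 < derive1 (fun eta : R => SC (softmax (fun k => z k + eta * dz k))) 0)
  <-> (\sum_(k < V) p k ^+ 2 < p ystar).
Proof.
move=> p dz.
have V_gt0 : (0 < V)%N := ltnW hV.
have z_line0 : (fun k => z k + 0 * dz k) = z by apply/funext => k; rewrite mul0r addr0.
rewrite derive1_SC_softmax_line ?sum_grad_logp ?softmax_sum1 // z_line0.
by rewrite sum_mul_grad_logp subr_gt0.
Qed.
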